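(* There exists an integer $a_0$ such that for every integer $a\ge a_0$ and every positive integer $k\le\log a$ (natural logarithm), with positive probability the random graph $G_{a,k}$ satisfies both: (i) $G_{a,k}$ has a fractional $2$-guidance system with maximum outdegree at most $3$, and (ii) $G_{a,k}$ does not have a weak $2$-guidance system with maximum outdegree at most $k$.
   Context: For positive integers $a,k$, let $m=k2^{k+1}$. The random graph $G_{a,k}$ is obtained as follows: take disjoint sets $L$ of size $a$ and $R$ of size $ma$, and join each vertex of $L$ to each vertex of $R$ independently with probability $1/2$ (no other edges among $L\cup R$); partition $R$ arbitrarily into $m$ parts $R_1,\dots,R_m$ of size $a$, and for each $i$ add a new vertex $x_i$ adjacent exactly to all vertices of $R_i$. A partial orientation of $G$ is a directed graph $\vec{H}$ on $V(G)$ such that every $(u,v)\in E(\vec{H})$ satisfies $uv\in E(G)$. $B_{\vec{H}}(v,a)$ is the set of vertices reachable from $v$ by a directed path of length at most $a$. A weak $r$-guidance system of $G$ is a partial orientation $\vec{H}$ such that for any distinct $u,v$ at distance $\ell\le r$ in $G$ there exist non-negative integers $a,b$ with $a+b=\ell-1$ such that $G$ has an edge between $B_{\vec{H}}(u,a)$ and $B_{\vec{H}}(v,b)$. For $u,v$ at distance $\ell$, $\Gamma_G(u,v)$ is the set of neighbors of $u$ at distance $\ell-1$ from $v$. A fractional orientation is a function $p$ assigning a non-negative real $p(u,v)$ to each ordered pair of adjacent vertices; its maximum outdegree is $\max_u\sum_{v:uv\in E(G)}p(u,v)$. A fractional $r$-guidance system is a fractional orientation $p$ such that for all $u,v$ at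 distance $\ell$ with $2\le\ell\le r$, $\sum_{y\in\Gamma_G(u,v)}p(u,y)+\sum_{y\in\Gamma_G(v,u)}p(v,y)\ge1$. *)

From HB Require Import structures.
From mathcomp Require Import all_boot all_order all_algebra.
From mathcomp Require Import boolp reals exp.
Set Implicit Arguments. Unset Strict Implicit. Unset Printing Implicit Defensive.
Import Order.TTheory GRing.Theory Num.Theory.
Local Open Scope ring_scope.

Section Graphs.
Variable V : finType.

Definition walkb (e : rel V) (u v : V) (l : nat) : bool :=
  [exists p : l.-tuple V, path e u p && (last u p == v)].

Definition gdistb (e : rel V) (u v : V) (l : nat) : bool :=
  walkb e u v l && [forall l' : 'I_l, ~~ walkb e u v l'].

Definition partial_orientation (e H : rel V) : Prop :=
  forall u v, H u v -> e u v.

Definition ballH (H : rel V) (v : V) (a : nat) (x : V) : Prop :=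
  exists l, (l <= a)%N /\ walkb H v x l.

Definition max_outdeg_le (H : rel V) (k : nat) : Prop :=
  forall u, (#|[set v | H u v]| <= k)%N.

Definition weak_guidance (e H : rel V) (r : nat) : Prop :=
  partial_orientation e H /\
  forall u v l, u != v -> gdistb e u v l -> (l <= r)%N ->
    exists a b : nat, (a + b = l.-1)%N /\
      exists x y, [/\ ballH H u a x, ballH H v b y & e x y].

Definition Gamma (e : rel V) (u v : V) (l : nat) : {set V} :=
  [set y | e u y & gdistb e y v l.-1].

Variable R : realType.

Definition frac_max_outdeg_le (e : rel V) (p : V -> V -> R) (k : R) : Prop :=
  forall u, \sum_(v | e u v) p u v <= k.

Definition fractional_guidance (e : rel V) (p : V -> V -> R) (r : nat) : Prop :=
  (forall u v, e u v -> 0 <= p u v) /\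
  forall u v l, gdistb e u v l -> (2 <= l <= r)%N ->
    1 <= \sum_(y in Gamma e u v l) p u y + \sum_(y in Gamma e v u l) p v y.

End Graphs.

Definition mk (k : nat) : nat := (k * 2 ^ k.+1)%N.

(* vertices: L = 'I_a, R = 'I_m * 'I_a (R_i = {i} x 'I_a), x_i for i : 'I_m *)
Definition Vt (a k : nat) : finType := (('I_a + ('I_(mk k) * 'I_a)) + 'I_(mk k))%type.

(* an outcome: the set of L-R pairs that are joined *)
Definition Outcome (a k : nat) : finType := {set 'I_a * ('I_(mk k) * 'I_a)}.

Definition Gadj (a k : nat) (E : Outcome a k) : rel (Vt a k) :=
  fun x y =>
    match x, y with
    | inl (inl l), inl (inr r) => (l, r) \in E
    | inl (inr r), inl (inl l) => (l, r) \in E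
    | inl (inr r), inr i => r.1 == i
    | inr i, inl (inr r) => r.1 == i
    | _, _ => false
    end.

(* probability of an event under the uniform distribution on outcomes,
   i.e. each L-R pair independently present with probability 1/2 *)
Definition probG (R : realType) (a k : nat) (P : Outcome a k -> Prop) : R :=
  (#|[set E : Outcome a k | `[< P E >]]|%:R) / (#|[set: Outcome a k]|%:R).

(* Positive probability only asks for one good outcome, and an explicit one works.
   Identify the vectors of F_2^(k+1) with vertices of L and of every block R_i
   (possible because k <= ln a gives 2^(k+1) <= a) and join u in L to v in R_i iff
   u.v = 1.  A nonzero vector is orthogonal to exactly half of all vectors and two
   nonzero vectors are both non-orthogonal to at least a quarter of them, so uniform
   weights on neighbours give a fractional 2-guidance system of outdegree at most 3.
   In a weak 2-guidance system H of outdegree at most k, x_i points to at most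
   k < k+1 vectors of R_i, so some nonzero u_i is orthogonal to all of them; the
   nonzero vectors of L send at most k (2^(k+1) - 1) < m arcs into blocks, so for
   some i the vertex u_i sends none into R_i, and then H guides nothing between
   u_i and x_i although they are at distance 2. *)

From HB Require Import structures.
From mathcomp Require Import all_boot all_order all_algebra.
From mathcomp Require Import boolp reals exp sequences.
From mathcomp Require Import lra.
Import Order.TTheory GRing.Theory Num.Theory.
Set Implicit Arguments. Unset Strict Implicit. Unset Printing Implicit Defensive.

Section Walks.
Variables (V : finType) (e : rel V).

Lemma walkb0 u v : walkb e u v 0 = (u == v).
Proof.
apply/existsP/eqP => [[p /andP[_ /eqP <-]]|->]; first by rewrite (tuple0 p).
by exists [tuple]; rewrite /= eqxx.
Qed.

Lemma walkb1 u v : walkb e u v 1 = e u v.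
Proof.
apply/existsP/idP => [[p]|euv]; last by exists [tuple v]; rewrite /= euv eqxx.
by case/tupleP: p => x p; rewrite (tuple0 p) /= andbT => /andP[exu /eqP <-].
Qed.

Lemma walkb2P u v : reflect (exists2 w, e u w & e w v) (walkb e u v 2).
Proof.
apply: (iffP existsP) => [[p]|[w euw ewv]].
  case/tupleP: p => x p; case/tupleP: p => y p.
  by rewrite (tuple0 p) /= andbT => /andP[/andP[eux exy] /eqP <-]; exists x.
by exists [tuple w; v]; rewrite /= euw ewv eqxx.
Qed.

Lemma gdistb1 u v : gdistb e u v 1 = e u v && (u != v).
Proof.
rewrite /gdistb walkb1; congr (_ && _).
apply/forallP/idP => [/(_ ord0)|neq_uv [[|//] ?]]; by rewrite walkb0.
Qed.

Lemma gdistb2P u v :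
  reflect [/\ u != v, ~~ e u v & exists2 w, e u w & e w v] (gdistb e u v 2).
Proof.
apply: (iffP andP) => [[/walkb2P euwv /forallP d2]|[neq_uv neuv euwv]].
  by have := d2 ord0; have := d2 (@Ordinal 2 1 isT); rewrite walkb0 walkb1.
split; first exact/walkb2P.
by apply/forallP => -[[|[|//]] ?]; rewrite ?walkb0 ?walkb1.
Qed.

Lemma Gamma2E u v y : irreflexive e ->
  (y \in Gamma e u v 2) = e u y && e y v.
Proof.
move=> irr_e; rewrite inE gdistb1.
by case: eqVneq => [->|_]; rewrite ?irr_e ?andbF ?andbT.
Qed.

End Walks.

Lemma ballH0 (V : finType) (H : rel V) x y : ballH H x 0 y -> y = x.
Proof. by case=> l []; rewrite leqn0 => /eqP ->; rewrite walkb0 => /eqP. Qed.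

Lemma ballH1 (V : finType) (H : rel V) x y : ballH H x 1 y -> y = x \/ H x y.
Proof.
case=> -[|[|l]] [le_l1 wxy] //; first by left; move: wxy; rewrite walkb0 => /eqP.
by right; rewrite -walkb1.
Qed.

Section BoolVectors.
Variable n : nat.

Definition bvec := {ffun 'I_n -> bool}.
Definition bdot (u v : bvec) : bool := \big[addb/false]_(j < n) (u j && v j).
Definition bvadd (u v : bvec) : bvec := [ffun j => u j (+) v j].
Definition bdelta (j : 'I_n) : bvec := [ffun i => i == j].
Definition bvec0 : bvec := [ffun => false].

Lemma card_bvec : #|{: bvec}| = 2 ^ n.
Proof. by rewrite card_ffun card_bool card_ord. Qed.

Lemma bdotC : commutative bdot.
Proof. by move=> u v; apply: eq_bigr => j _; rewrite andbC. Qed.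

Lemma bdotDr u v w : bdot u (bvadd v w) = bdot u v (+) bdot u w.
Proof.
rewrite /bdot -big_split /=; apply: eq_bigr => j _; rewrite ffunE.
by case: (u j) (v j) (w j) => [] [] [].
Qed.

Lemma bdotDl u v w : bdot (bvadd u v) w = bdot u w (+) bdot v w.
Proof. by rewrite bdotC bdotDr !(bdotC w). Qed.

Lemma bdot_delta u j : bdot u (bdelta j) = u j.
Proof.
rewrite /bdot (bigD1 j) //= big1 => [|i /negbTE neq_ij]; rewrite ffunE.
  by rewrite eqxx andbT addbF.
by rewrite neq_ij andbF.
Qed.

Lemma bdot0l v : bdot bvec0 v = false.
Proof. by rewrite /bdot big1 // => j _; rewrite ffunE. Qed.

Lemma bdot_neq0l u v : bdot u v -> u != bvec0.
Proof. by apply: contraTneq => ->; rewrite bdot0l. Qed.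

Lemma bdot_neq0r u v : bdot u v -> v != bvec0.
Proof. by rewrite bdotC; apply: bdot_neq0l. Qed.

Lemma bvec_neq0P (u : bvec) : reflect (exists j, u j) (u != bvec0).
Proof.
apply: (iffP idP) => [|[j uj]]; last by apply: contraTneq uj => ->; rewrite ffunE.
move=> nz_u; apply/existsP; apply: contraR nz_u => /existsPn u0.
by apply/eqP/ffunP => j; rewrite ffunE; apply/negbTE.
Qed.

Lemma bvaddK t : involutive (bvadd ^~ t).
Proof. by move=> v; apply/ffunP => j; rewrite !ffunE addbK. Qed.

Lemma card_bdot_half u t (Q : pred bvec) :
  bdot u t -> (forall v, Q (bvadd v t) = Q v) ->
  (2 * #|[set v | bdot u v && Q v]| = #|[set v | Q v]|)%N.
Proof.
move=> ut Qt.
have flip : #|[set v | bdot u v && Q v]| = #|[set v | ~~ bdot u v && Q v]|.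
  rewrite -(card_preimset _ (inv_inj (bvaddK t))); apply: eq_card => v.
  by rewrite !inE bdotDr ut Qt addbT.
rewrite mul2n -addnn {2}flip -(cardsID [set v | bdot u v] [set v | Q v]).
by congr (_ + _); apply: eq_card => v; rewrite !inE andbC.
Qed.

Lemma card_bdot u : u != bvec0 -> (2 * #|[set v | bdot u v]| = 2 ^ n)%N.
Proof.
case/bvec_neq0P => j uj; rewrite -card_bvec -cardsT.
have := card_bdot_half (u := u) (t := bdelta j) (Q := predT); rewrite bdot_delta => /(_ uj).
by rewrite /=; under eq_finset do rewrite andbT; apply.
Qed.

Lemma card_bdotI u1 u2 : u1 != bvec0 -> u2 != bvec0 ->
  (2 ^ n <= 4 * #|[set v | bdot u1 v && bdot u2 v]|)%N.
Proof.
have [<- nz_u1 _|neq_u12] := eqVneq u1 u2.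
  by under eq_finset do rewrite andbb; rewrite -(card_bdot nz_u1) leq_mul2r orbT.
have [j neq_u12j] : exists j, u1 j != u2 j.
  apply/existsP; apply: contraR neq_u12 => /existsPn eq_u12.
  by apply/eqP/ffunP => j; apply/eqP/negPn.
wlog [u1j u2j] : u1 u2 {neq_u12} neq_u12j / u1 j /\ ~~ u2 j.
  move=> base; move: neq_u12j; case u1j: (u1 j); case u2j: (u2 j) => // _.
    by apply: base; rewrite ?u1j ?u2j.
  move=> nz_u1 nz_u2; under eq_finset do rewrite andbC.
  by apply: base; rewrite ?u1j ?u2j.
move=> _ nz_u2; rewrite -(card_bdot nz_u2).
rewrite -(card_bdot_half (u := u1) (t := bdelta j) (Q := bdot u2)).
- by rewrite mulnA.
- by rewrite bdot_delta.
by move=> v; rewrite bdotDr bdot_delta (negbTE u2j) addbF.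
Qed.

Lemma exists_bdot_orthogonal (S : {set bvec}) : (#|S| < n)%N ->
  exists2 u, u != bvec0 & {in S, forall v, ~~ bdot u v}.
Proof.
move=> small_S; pose f u := [ffun v : {v | v \in S} => bdot u (val v)].
have /injectivePn [u1 [u2 neq_u12 eq_f]] : ~~ injectiveb f.
  apply: contraL small_S => /injectiveP/leq_card.
  by rewrite card_bvec card_ffun card_bool card_sig leq_exp2l // -leqNgt.
exists (bvadd u1 u2) => [|v vS].
  apply: contra neq_u12 => /eqP u12_0; apply/eqP/ffunP => j.
  by move/ffunP/(_ j): u12_0; rewrite !ffunE; case: (u1 j) (u2 j) => [] [].
move/ffunP/(_ (exist _ v vS)): eq_f; rewrite !ffunE /= bdotDl => ->.
by rewrite addbb.
Qed.

End BoolVectors.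
Arguments bvec0 {n}.

Local Open Scope ring_scope.

Lemma probG_gt0 (R : realType) a k (P : Outcome a k -> Prop) :
  (exists E, P E) -> 0 < probG R P.
Proof.
case=> E PE; apply: divr_gt0; rewrite ltr0n card_gt0; apply/set0Pn.
  by exists E; rewrite inE; apply/asboolP.
by exists set0; rewrite inE.
Qed.

Section Sums.
Variable R : numFieldType.

Lemma sum_le_card_mul (T : finType) (P : pred T) (A : {set T}) (f : T -> R) c :
  0 <= c -> (forall y, P y -> f y <= (if y \in A then c else 0)) ->
  \sum_(y | P y) f y <= c * #|A|%:R.
Proof.
move=> c_ge0 le_f; apply: le_trans (ler_sum _ le_f) _.
rewrite -sum1_card natr_sum mulr_sumr [leLHS]big_mkcond [leRHS]big_mkcond.
by apply: ler_sum => y _; case: (P y); case: (y \in A); rewrite ?mulr1.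
Qed.

Lemma card_mul_le_sum (T : finType) (A B : {set T}) (f : T -> R) c :
  B \subset A -> {in A, forall y, 0 <= f y} -> {in B, forall y, c <= f y} ->
  c * #|B|%:R <= \sum_(y in A) f y.
Proof.
move=> /setIidPr sBA f_ge0 le_cf; rewrite (big_setID B) /= sBA -[_ * _]addr0.
rewrite -sum1_card natr_sum mulr_sumr; apply: lerD.
  by apply: ler_sum => y /le_cf; rewrite mulr1.
by apply: sumr_ge0 => y /setDP[/f_ge0].
Qed.

Lemma weight_le (x : R) (D s : nat) : 0 <= x -> (s <= D)%N -> x / D%:R * s%:R <= x.
Proof.
move=> x_ge0 le_sD; have [->|D_gt0] := posnP D.
  by rewrite invr0 mulr0 mul0r.
by rewrite mulrAC ler_pdivrMr ?ltr0n // ler_wpM2l // ler_nat.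
Qed.

Lemma weight_ge (x : R) (D q s : nat) : 0 <= x -> (0 < D)%N -> (0 < q)%N ->
  (D <= q * s)%N -> x / q%:R <= x / D%:R * s%:R.
Proof.
move=> x_ge0 D_gt0 q_gt0 le_D_qs.
rewrite mulrAC ler_pdivlMr ?ltr0n // -mulrA ler_wpM2l //.
by rewrite mulrC ler_pdivrMr ?ltr0n // -natrM ler_nat mulnC.
Qed.
End Sums.

Lemma exists_bvec_embedding n a : (2 ^ n <= a)%N ->
  exists emb : bvec n -> 'I_a, injective emb.
Proof.
rewrite -card_bvec => le_card; exists (fun v => widen_ord le_card (enum_rank v)).
by move=> u v /(congr1 val) /= /val_inj /enum_rank_inj.
Qed.

Section InnerProductGraph.
Variables (a k : nat) (emb : bvec k.+1 -> 'I_a).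
Hypothesis emb_inj : injective emb.
Hypothesis k_gt0 : (0 < k)%N.

Local Notation n := k.+1.
Local Notation m := (mk k).
Local Notation LV l := (inl (inl l) : Vt a k).
Local Notation RV i r := (inl (inr (i, r)) : Vt a k).
Local Notation XV i := (inr i : Vt a k).

Definition inner_outcome : Outcome a k :=
  [set p | [exists u, exists v, [&& emb u == p.1, emb v == p.2.2 & bdot u v]]].

Local Notation G := (Gadj inner_outcome).

Lemma m_gt0 : (0 < m)%N.
Proof. by rewrite muln_gt0 k_gt0 expn_gt0. Qed.

Lemma G_sym : symmetric G.
Proof. by case=> [[l|[i r]]|i] [[l'|[i' r']]|i']. Qed.

Lemma G_irr : irreflexive G.
Proof. by case=> [[l|[i r]]|i]. Qed.

Lemma G_emb u i v : G (LV (emb u)) (RV i (emb v)) = bdot u v.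
Proof.
rewrite /Gadj inE /=; apply/existsP/idP => [[u' /existsP[v']]|uv].
  by case/and3P => /eqP/emb_inj -> /eqP/emb_inj ->.
by exists u; apply/existsP; exists v; rewrite !eqxx.
Qed.

Lemma G_LR_inv l i r : G (LV l) (RV i r) ->
  exists u v, [/\ l = emb u, r = emb v & bdot u v].
Proof.
rewrite /Gadj inE /= => /existsP[u /existsP[v /and3P[/eqP <- /eqP <- uv]]].
by exists u, v.
Qed.

Section Fractional.
Variable R : realType.

Definition wL : R := 2 / (m * 2 ^ n)%:R.
Definition wN : R := 2 / (2 ^ n)%:R.

(* Every vertex spreads weight [2] over its at most [m 2^n] (from [L]) or [2^n]
   (from [R] and [x_i]) neighbours in the image of [emb]; [R_i] also gives
   [1/2] to [x_i]. *)
Definition frac_orientation (x y : Vt a k) : R :=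
  match x, y with
  | inl (inl _), _ => wL
  | inl (inr _), inr _ => 1 / 2
  | inl (inr _), _ => wN
  | inr _, inl (inr (_, r)) => if r \in codom emb then wN else 0
  | inr _, _ => 0
  end.

Local Notation p := frac_orientation.

Lemma wL_ge0 : 0 <= wL. Proof. by rewrite divr_ge0. Qed.
Lemma wN_ge0 : 0 <= wN. Proof. by rewrite divr_ge0. Qed.

Lemma frac_orientation_ge0 x y : 0 <= p x y.
Proof.
case: x => [[l|[i r]]|i]; first exact: wL_ge0.
  by case: y => [[l'|[j r']]|j] /=; rewrite ?wN_ge0 //; lra.
by case: y => [[l'|[j r']]|j] //=; case: ifP; rewrite ?wN_ge0.
Qed.

Lemma frac_outdeg_L l : \sum_(y | G (LV l) y) p (LV l) y <= 2.
Proof.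
pose A := [set RV q.1 (emb q.2) | q : 'I_m * bvec n].
apply: le_trans (sum_le_card_mul (A := A) wL_ge0 _) _.
  move=> [[l'|[j r]]|j] //= /G_LR_inv[u [v [_ -> _]]].
  by rewrite ifT //; apply/imsetP; exists (j, v).
apply: weight_le => //; apply: leq_trans (leq_imset_card _ _) _.
by rewrite card_prod card_ord card_bvec.
Qed.

Lemma frac_outdeg_R i r : \sum_(y | G (RV i r) y) p (RV i r) y <= 1 / 2 + 2.
Proof.
rewrite (bigD1 (XV i)) /= ?eqxx // lerD2l.
pose A := [set LV (emb u) | u : bvec n].
apply: le_trans (sum_le_card_mul (A := A) wN_ge0 _) _.
  move=> [[l|[j r']]|j] //=; last by case/andP => /eqP ->; rewrite eqxx.
  rewrite andbT => /G_LR_inv[u [v [-> _ _]]].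
  by rewrite ifT //; apply/imsetP; exists u.
apply: weight_le => //; apply: leq_trans (leq_imset_card _ _) _.
by rewrite card_bvec.
Qed.

Lemma frac_outdeg_X i : \sum_(y | G (XV i) y) p (XV i) y <= 2.
Proof.
pose A := [set RV i (emb v) | v : bvec n].
apply: le_trans (sum_le_card_mul (A := A) wN_ge0 _) _.
  move=> [[l|[j r]]|j] //= /eqP ->; case: codomP => [[v ->]|_].
    by rewrite ifT //; apply/imsetP; exists v.
  by case: ifP; rewrite ?wN_ge0.
apply: weight_le => //; apply: leq_trans (leq_imset_card _ _) _.
by rewrite card_bvec.
Qed.

Lemma frac_max_outdeg : frac_max_outdeg_le G p 3.
Proof.
case=> [[l|[i r]]|i].
- by apply: le_trans (frac_outdeg_L l) _; lra.
- by apply: le_trans (frac_outdeg_R i r) _; lra.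
- by apply: le_trans (frac_outdeg_X i) _; lra.
Qed.

Lemma sum_Gamma2_ge x z c (B : {set Vt a k}) :
  {in B, forall y, G x y && G y z} -> {in B, forall y, c <= p x y} ->
  c * #|B|%:R <= \sum_(y in Gamma G x z 2) p x y.
Proof.
move=> B_mid le_c; apply: card_mul_le_sum le_c.
- by apply/subsetP => y /B_mid; rewrite Gamma2E //; apply: G_irr.
- by move=> y _; apply: frac_orientation_ge0.
Qed.

Lemma frac_Gamma_LL u1 u2 : u1 != bvec0 -> u2 != bvec0 ->
  1 / 2 <= \sum_(y in Gamma G (LV (emb u1)) (LV (emb u2)) 2) p (LV (emb u1)) y.
Proof.
move=> nz_u1 nz_u2; pose C := [set v | bdot u1 v && bdot u2 v].
pose B := [set RV q.1 (emb q.2) | q in setX [set: 'I_m] C].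
have card_B : #|B| = (m * #|C|)%N.
  by rewrite card_imset ?cardsX ?cardsT ?card_ord // => -[i v] [i' v'] [-> /emb_inj ->].
apply: le_trans (sum_Gamma2_ge (c := wL) (B := B) _ _).
- apply: le_trans (weight_ge (q := 4) _ _ _ _) => //; first lra.
    by rewrite muln_gt0 m_gt0 expn_gt0.
  by rewrite card_B mulnCA leq_mul2l card_bdotI ?orbT.
- move=> y /imsetP[[i v]]; rewrite !inE => /andP[_ /andP[u1v u2v]] ->.
  by rewrite G_emb G_sym G_emb u1v u2v.
- by move=> y /imsetP[q _ ->].
Qed.

Lemma frac_Gamma_XL i u : u != bvec0 ->
  1 <= \sum_(y in Gamma G (XV i) (LV (emb u)) 2) p (XV i) y.
Proof.
move=> nz_u; pose C := [set v | bdot u v].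
pose B := [set RV i (emb v) | v in C].
have card_B : #|B| = #|C| by rewrite card_imset // => v v' [/emb_inj].
apply: le_trans (sum_Gamma2_ge (c := wN) (B := B) _ _).
- apply: le_trans (weight_ge (q := 2) _ _ _ _) => //; first lra.
    by rewrite expn_gt0.
  by rewrite card_B card_bdot.
- move=> y /imsetP[v]; rewrite inE => uv ->.
  by rewrite [G _ (LV _)]G_sym G_emb uv andbT /= eqxx.
- by move=> y /imsetP[v _ ->]; rewrite /= codom_f.
Qed.

Lemma frac_Gamma_RR_block i r r' :
  1 / 2 <= \sum_(y in Gamma G (RV i r) (RV i r') 2) p (RV i r) y.
Proof.
apply: le_trans (sum_Gamma2_ge (c := 1 / 2) (B := [set XV i]) _ _).
- by rewrite cards1 mulr1.
- by move=> y /set1P ->; rewrite /= eqxx.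
- by move=> y /set1P ->.
Qed.

Lemma frac_Gamma_RR i i' v1 v2 : v1 != bvec0 -> v2 != bvec0 ->
  1 / 2 <= \sum_(y in Gamma G (RV i (emb v1)) (RV i' (emb v2)) 2) p (RV i (emb v1)) y.
Proof.
move=> nz_v1 nz_v2; pose C := [set u | bdot v1 u && bdot v2 u].
pose B := [set LV (emb u) | u in C].
have card_B : #|B| = #|C| by rewrite card_imset // => u u' [/emb_inj].
apply: le_trans (sum_Gamma2_ge (c := wN) (B := B) _ _).
- apply: le_trans (weight_ge (q := 4) _ _ _ _) => //; first lra.
    by rewrite expn_gt0.
  by rewrite card_B card_bdotI.
- move=> y /imsetP[u]; rewrite inE => /andP[v1u v2u] ->.
  by rewrite G_sym !G_emb !(bdotC u) v1u v2u.
- by move=> y /imsetP[u _ ->].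
Qed.

Lemma frac_guidance : fractional_guidance G p 2.
Proof.
split=> [x y _|x y l dxy]; first exact: frac_orientation_ge0.
rewrite -eqn_leq => /eqP l2; subst l; case/gdistb2P: dxy => neq_xy _ [w xw wy].
have sum_ge0 x' y' : 0 <= \sum_(z in Gamma G x' y' 2) p x' z.
  by apply: sumr_ge0 => z _; apply: frac_orientation_ge0.
have halves (s t : R) : 1 / 2 <= s -> 1 / 2 <= t -> 1 <= s + t by move=> *; lra.
move: x y w neq_xy xw wy => [[l1|[i r]]|i] [[l2'|[i' r']]|i'] [[l0|[j r0]]|j] //= neq_xy.
- move=> /G_LR_inv[u1 [v [-> _ /bdot_neq0l nz_u1]]].
  move=> /G_LR_inv[u2 [v' [-> _ /bdot_neq0l nz_u2]]].
  by apply: halves; apply: frac_Gamma_LL.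
- move=> /G_LR_inv[u [v [-> _ /bdot_neq0l nz_u]]] _.
  by rewrite -[1]add0r; apply: lerD; [apply: sum_ge0 | apply: frac_Gamma_XL].
- move=> /G_LR_inv[u [v1 [_ -> /bdot_neq0r nz_v1]]] /G_LR_inv[u' [v2 [_ -> /bdot_neq0r nz_v2]]].
  by apply: halves; apply: frac_Gamma_RR.
- move=> /eqP <- /eqP <-.
  by apply: halves; apply: frac_Gamma_RR_block.
- move=> _ /G_LR_inv[u [v [-> _ /bdot_neq0l nz_u]]].
  by rewrite -[1]addr0; apply: lerD; [apply: frac_Gamma_XL | apply: sum_ge0].
- by move=> /eqP ji /eqP ji'; rewrite -ji -ji' eqxx in neq_xy.
Qed.

End Fractional.

Section NoWeakGuidance.
Variable H : rel (Vt a k).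
Hypothesis H_outdeg : max_outdeg_le H k.

Definition block_of (y : Vt a k) : option 'I_m :=
  if y is inl (inr (i, _)) then Some i else None.

Lemma card_blocks_reached x : (#|[set i | [exists r, H x (RV i r)]]| <= k)%N.
Proof.
rewrite -(card_imset _ (@Some_inj _)); apply: leq_trans (H_outdeg x).
apply: leq_trans (leq_imset_card block_of _); apply: subset_leq_card.
apply/subsetP => o /imsetP[i]; rewrite inE => /existsP[r Hxr] ->.
by apply/imsetP; exists (RV i r); rewrite ?inE.
Qed.

Lemma exists_orthogonal_to_block i :
  exists u, u != bvec0 /\ forall v, H (XV i) (RV i (emb v)) -> ~~ bdot u v.
Proof.
pose S := [set v | H (XV i) (RV i (emb v))].
have [|u nz_u orth_u] := @exists_bdot_orthogonal n S.
  have inj : injective (fun v => RV i (emb v)) by move=> v v' [/emb_inj].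
  rewrite ltnS -(card_imset _ inj); apply: leq_trans (H_outdeg (XV i)).
  by apply: subset_leq_card; apply/subsetP => y /imsetP[v]; rewrite !inE => Hv ->.
by exists u; split=> // v Hv; apply: orth_u; rewrite inE.
Qed.

Lemma exists_unreached_block (f : 'I_m -> bvec n) : (forall i, f i != bvec0) ->
  exists i, ~~ [exists r, H (LV (emb (f i))) (RV i r)].
Proof.
move=> nz_f; apply/existsP; rewrite -negb_forall; apply/negP => /forallP reached.
have : (m <= k * (2 ^ n).-1)%N.
  rewrite -{1}(card_ord m) -sum1_card (partition_big f (fun u => u != bvec0)) //.
  rewrite -(card_bvec n) -(cardC1 (@bvec0 n)) mulnC -sum_nat_const; apply: leq_sum => u _.
  rewrite sum1_card; apply: leq_trans (card_blocks_reached (LV (emb u))).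
  apply: subset_leq_card; apply/subsetP => i fi_u.
  have <- : f i = u by exact/eqP.
  by rewrite inE reached.
by rewrite /mk leq_mul2l leqNgt ltn_predL expn_gt0 orbF eqn0Ngt k_gt0.
Qed.

Lemma no_weak_guidance : ~ weak_guidance G H 2.
Proof.
case=> H_sub wg.
have /fin_all_exists[f f_spec] := exists_orthogonal_to_block.
have [i unreached] := exists_unreached_block (fun i => (f_spec i).1).
have [nz_u orth_u] := f_spec i; set u := f i in unreached nz_u orth_u.
have /bvec_neq0P[j uj] := nz_u.
have d2 : gdistb G (LV (emb u)) (XV i) 2.
  apply/gdistb2P; split=> //; exists (RV i (emb (bdelta j))).
    by rewrite G_emb bdot_delta.
  by rewrite /= eqxx.
have [[|[|?]] [[|[|?]] [//= _ [x [y [ball_x ball_y xy]]]]]] :=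
  wg (LV (emb u)) (XV i) 2 isT d2 (leqnn 2).
(* Either [x_i] points to a neighbour of [u] in [R_i], against orthogonality,
   or [u] points into [R_i], against the choice of [i]. *)
- move: ball_x xy => /ballH0 ->; case/ballH1: ball_y => [-> //|Hiy].
  case: y Hiy (H_sub _ _ Hiy) => [[l|[i' r]]|i'] Hiy //= /eqP ii'; subst i'.
  case/G_LR_inv=> u' [v [/emb_inj <- r_v uv]]; rewrite r_v in Hiy.
  by move: (orth_u v Hiy); rewrite uv.
- move: ball_y xy => /ballH0 ->; case/ballH1: ball_x => [-> //|Hux].
  case: x Hux => [[l|[i' r]]|i'] Hux //= /eqP ii'.
  by case/existsP: unreached; exists r; rewrite -ii'.
Qed.

End NoWeakGuidance.

End InnerProductGraph.

Section ExpBounds.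
Variable R : realType.

Lemma expR1_ge : 9 / 4 <= expR 1 :> R.
Proof.
have -> : 1 = 2%:R * (1 / 2) :> R by rewrite mulrC divfK ?pnatr_eq0.
rewrite expRM_natl expr2; have := expR_ge1Dx (1 / 2 : R); nra.
Qed.

Lemma exp2S_le_pow94 j : (2 ^ (j + 6).+1)%:R <= (9 / 4) ^+ (j + 6) :> R.
Proof.
elim: j => [|j IH]; first by rewrite natrX !exprS expr0; lra.
rewrite addSn expnS natrM exprS.
have : 0 <= (2 ^ (j + 6).+1)%:R :> R by [].
nra.
Qed.

Lemma exp2S_le_of_ln a k : (2 ^ 7 <= a)%N -> k%:R <= ln (a%:R : R) -> (2 ^ k.+1 <= a)%N.
Proof.
move=> le_a k_le_ln; have [le_k6|lt6k] := leqP k 6.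
  by apply: leq_trans le_a; rewrite leq_exp2l.
have a_gt0 : 0 < a%:R :> R by rewrite ltr0n; apply: leq_trans le_a.
rewrite -(ler_nat R); apply: le_trans (_ : expR k%:R <= _); last first.
  by rewrite -[leRHS](lnK a_gt0) ler_expR.
rewrite -[k%:R]mulr1 expRM_natl -(subnK (ltnW lt6k)).
apply: le_trans (exp2S_le_pow94 _) _; apply: lerXn2r; rewrite ?nnegrE ?expR_ge0 //.
  lra.
exact: expR1_ge.
Qed.

End ExpBounds.

Theorem lemma18 :
  exists a0 : nat, forall (R : realType) (a k : nat),
    (a0 <= a)%N -> (0 < k)%N -> (k%:R <= ln (a%:R : R)) ->
    0 < probG R (fun E : Outcome a k =>
          (exists p : Vt a k -> Vt a k -> R,
              fractional_guidance (Gadj E) p 2 /\ frac_max_outdeg_le (Gadj E) p 3)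
          /\ ~ (exists H : rel (Vt a k),
              weak_guidance (Gadj E) H 2 /\ max_outdeg_le H k)).
Proof.
exists (2 ^ 7)%N => R a k le_a k_gt0 k_le_ln.
have [emb emb_inj] := exists_bvec_embedding (exp2S_le_of_ln le_a k_le_ln).
apply: probG_gt0; exists (inner_outcome emb); split.
  exists (frac_orientation emb R); split.
    exact: frac_guidance.
  exact: frac_max_outdeg.
by case=> H [wg H_outdeg]; apply: (no_weak_guidance emb_inj k_gt0 H_outdeg).
Qed.
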